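(* For every real $c<1$ there exist an infinite binary sequence $\omega=\omega_1\omega_2\omega_3\dots$ and a constant $d$ such that every finite substring $x=\omega_i\omega_{i+1}\dots\omega_j$ of $\omega$ satisfies $K(x)\ge c\,\|x\|-d$. *)

From Stdlib Require Import Reals List Arith.
Import ListNotations.
Open Scope R_scope.

Inductive prf : Type :=
| PZero : prf
| PSucc : prf
| PProj : nat -> prf
| PComp : prf -> list prf -> prf
| PRec  : prf -> prf -> prf
| PMin  : prf -> prf.

Inductive eval : prf -> list nat -> nat -> Prop :=
| eZero v : eval PZero v 0
| eSucc x v : eval PSucc (x :: v) (S x)
| eProj i v : (i < length v)%nat -> eval (PProj i) v (nth i v 0%nat)
| eComp f gs v ys y : evals gs v ys -> eval f ys y -> eval (PComp f gs) v y
| eRec0 f g v y : eval f v y -> eval (PRec f g) (0%nat :: v) y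
| eRecS f g n v y z :
    eval (PRec f g) (n :: v) y -> eval g (n :: y :: v) z ->
    eval (PRec f g) (S n :: v) z
| eMin f v n :
    eval f (n :: v) 0%nat ->
    (forall m, (m < n)%nat -> exists k, eval f (m :: v) (S k)) ->
    eval (PMin f) v n
with evals : list prf -> list nat -> list nat -> Prop :=
| esNil v : evals [] v []
| esCons g gs v y ys : eval g v y -> evals gs v ys -> evals (g :: gs) v (y :: ys).

(** Binary strings and their standard bijective encoding into nat:
    [] -> 0, b :: s -> 2 * code s + 1 + b. *)
Definition bstring := list bool.

Fixpoint code (s : bstring) : nat :=
  match s with
  | [] => 0%nat
  | b :: s' => (2 * code s' + 1 + (if b then 1 else 0))%nat
  end.

Definition decomp (f : prf) (p x : bstring) : Prop := eval f [code p] (code x).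

Definition optimal (U : prf) : Prop :=
  forall g : prf, exists c : nat, forall p x : bstring,
    decomp g p x -> exists q, decomp U q x /\ (length q <= length p + c)%nat.

Definition substring (w : nat -> bool) (i j : nat) : bstring :=
  map w (seq i (S (j - i))).

From Stdlib Require Import Reals List Arith Lia Lra ClassicalDescription Classical FinFun.
Import ListNotations.
Open Scope R_scope.

(* Call a word forbidden when it has a description shorter than c|x| - d.  At most
   2^(ck - d + 1) = 2^(1-d) mu^k words of length k are forbidden, where mu = 2^c < 2.
   If a_n counts the words of length n with no forbidden factor, every extension by one
   letter of such a word either avoids forbidden factors or begins with one, whence
   2 a_n <= a_(n+1) + sum_k F_(k+1) a_(n-k).  When F_k <= B mu^k with B small (i.e. d large)
   this forces a_(n+1) >= lam a_n for some lam in (mu, 2), so avoiding words of every length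
   exist, and Koenig's lemma turns them into an infinite sequence. *)

Fixpoint eval_functional f v y (D : eval f v y) {struct D} :
  forall y', eval f v y' -> y = y'
with evals_functional gs v ys (D : evals gs v ys) {struct D} :
  forall ys', evals gs v ys' -> ys = ys'.
Proof.
  - destruct D as [| | | | | |f0 v0 n Hzero Hbelow]; intros y' D'; inversion D'; subst;
      try reflexivity.
    + assert (ys = ys0) by (eapply evals_functional; eassumption); subst.
      eapply eval_functional; eassumption.
    + eapply eval_functional; eassumption.
    + assert (y = y0) by (eapply eval_functional; eassumption); subst.
      eapply eval_functional; eassumption.
    + (* both results are the first zero of [f0 (_ :: v0)] *)
      destruct (lt_eq_lt_dec n y') as [[Hlt | Heq] | Hlt]; [| exact Heq |].
      * destruct (H1 n Hlt) as [k Hk].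
        discriminate (eval_functional _ _ _ Hzero _ Hk).
      * destruct (Hbelow y' Hlt) as [k Hk].
        discriminate (eval_functional _ _ _ Hk _ H0).
  - destruct D; intros ys' D'; inversion D'; subst; [reflexivity |].
    f_equal; [eapply eval_functional | eapply evals_functional]; eassumption.
Qed.

Lemma code_injective s t : code s = code t -> s = t.
Proof.
  revert t; induction s as [|a s IH]; intros [|b t]; simpl; intros H;
    [reflexivity | destruct b; simpl in H; lia | destruct a; simpl in H; lia |].
  assert (a = b /\ code s = code t) as [-> E]
    by (destruct a, b; simpl in H; split; (reflexivity || lia || (exfalso; lia))).
  now rewrite (IH _ E).
Qed.

Lemma decomp_functional f p x y : decomp f p x -> decomp f p y -> x = y.
Proof. intros Hx Hy; apply code_injective, (eval_functional _ _ _ Hx _ Hy). Qed.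

Definition cons_both (l : list bstring) : list bstring :=
  map (cons false) l ++ map (cons true) l.

Lemma length_cons_both l : length (cons_both l) = (2 * length l)%nat.
Proof. unfold cons_both, bstring in *. rewrite length_app, !length_map. lia. Qed.

Lemma In_cons_both l x : In x (cons_both l) <-> exists b y, x = b :: y /\ In y l.
Proof.
  unfold cons_both. rewrite in_app_iff, !in_map_iff. split.
  - intros [[y [<- H]] | [y [<- H]]]; eauto.
  - intros [b [y [-> H]]]. destruct b; [right | left]; eauto.
Qed.

Lemma NoDup_cons_both l : NoDup l -> NoDup (cons_both l).
Proof.
  intros H. unfold cons_both. apply NoDup_app.
  1, 2: apply Injective_map_NoDup; auto; intros a b E; now injection E.
  intros x H1 H2. apply in_map_iff in H1, H2.
  destruct H1 as [? [<- _]], H2 as [? [E _]]. discriminate.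
Qed.

Fixpoint words (n : nat) : list bstring :=
  match n with O => [[]] | S n => cons_both (words n) end.

Lemma length_words n : length (words n) = (2 ^ n)%nat.
Proof. induction n; simpl; auto. rewrite length_cons_both, IHn. lia. Qed.

Lemma In_words n s : In s (words n) <-> length s = n.
Proof.
  revert s; induction n; intros s; simpl.
  - split; [intros [<- | []]; auto | destruct s; [auto | discriminate]].
  - rewrite In_cons_both. split.
    + intros [b [y [-> H]]]. simpl. f_equal. now apply IHn.
    + destruct s as [|b y]; simpl; intros H; [discriminate |].
      exists b, y. split; auto. apply IHn. lia.
Qed.

Lemma NoDup_words n : NoDup (words n).
Proof. induction n; simpl; [repeat constructor; auto | now apply NoDup_cons_both]. Qed.

Definition decide (P : Prop) : bool :=
  if excluded_middle_informative P then true else false.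

Lemma decide_true P : decide P = true <-> P.
Proof. unfold decide; destruct excluded_middle_informative; split; auto; discriminate. Qed.

Lemma decide_false P : decide P = false <-> ~ P.
Proof. unfold decide; destruct excluded_middle_informative; split; auto; try discriminate; tauto. Qed.

Lemma NoDup_length_le_rel {A B : Type} (eq_dec : forall x y : B, {x = y} + {x <> y})
  (R : A -> B -> Prop) (l : list A) (m : list B) :
  NoDup l -> (forall x, In x l -> exists y, In y m /\ R x y) ->
  (forall x x' y, R x y -> R x' y -> x = x') -> (length l <= length m)%nat.
Proof.
  revert m; induction l as [|x l IH]; intros m Hl Hex Hinj; simpl; [lia |].
  apply NoDup_cons_iff in Hl as [Hx Hl].
  destruct (Hex x (or_introl eq_refl)) as [y [Hy Rxy]].
  enough (length l <= length (remove eq_dec y m))%nat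
    by (pose proof (remove_length_lt eq_dec m y Hy); lia).
  apply IH; auto.
  intros x' Hx'. destruct (Hex x' (or_intror Hx')) as [y' [Hy' R']].
  exists y'. split; auto. apply in_in_remove; auto.
  intros ->. apply Hx. now rewrite <- (Hinj _ _ _ R' Rxy).
Qed.

Lemma length_short_words (X : R) (n : nat) :
  INR (length (flat_map words (filter (fun l => decide (INR l < X)) (seq 0 n))))
    <= 2 * Rpower 2 X.
Proof.
  pose (len m := INR (length (flat_map words
                   (filter (fun l => decide (INR l < X)) (seq 0 m))))).
  enough (len n + 1 <= 2 ^ n /\ len n <= 2 * Rpower 2 X) by tauto.
  assert (HX : 0 < Rpower 2 X) by apply exp_pos.
  induction n as [|n IH]; unfold len in *; [simpl; split; lra |].
  rewrite seq_S, filter_app, flat_map_app, length_app, plus_INR. simpl (0 + n)%nat.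
  cbn [filter]. destruct (decide (INR n < X)) eqn:Hn; cbn [flat_map].
  - rewrite decide_true in Hn.
    assert (2 ^ n < Rpower 2 X) by (rewrite <- Rpower_pow by lra; apply Rpower_lt; lra).
    rewrite app_nil_r, length_words, pow_INR. replace (INR 2) with 2 by (simpl; ring).
    simpl. lra.
  - assert (0 < 2 ^ n) by (apply pow_lt; lra). simpl. lra.
Qed.

Lemma count_describable (D : bstring -> bstring -> Prop) (l : list bstring) (X : R) :
  (forall p x y, D p x -> D p y -> x = y) -> NoDup l ->
  (forall x, In x l -> exists p, D p x /\ INR (length p) < X) ->
  INR (length l) <= 2 * Rpower 2 X.
Proof.
  intros HD Hl Hdesc.
  destruct (INR_unbounded X) as [n Hn].
  eapply Rle_trans; [apply le_INR | apply (length_short_words X n)].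
  apply (NoDup_length_le_rel (list_eq_dec Bool.bool_dec) (fun x p => D p x));
    [exact Hl | | intros x x' p; apply HD].
  intros x Hx. destruct (Hdesc x Hx) as [p [Hp Hlen]].
  exists p. split; auto.
  apply in_flat_map. exists (length p). split; [| now apply In_words].
  apply filter_In. rewrite decide_true. split; auto.
  apply in_seq. split; [lia |]. apply INR_lt. simpl. lra.
Qed.

Lemma length_flat_map_seq {A : Type} (g : nat -> list A) n :
  INR (length (flat_map g (seq 0 (S n)))) = sum_f_R0 (fun k => INR (length (g k))) n.
Proof.
  induction n as [|n IH]; [simpl; now rewrite app_nil_r |].
  rewrite seq_S, flat_map_app, length_app, plus_INR, IH, tech5. simpl.
  now rewrite app_nil_r.
Qed.

Section Avoidance.

Variable forbidden : bstring -> Prop.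

Definition avoiding (y : bstring) : Prop :=
  forall a z b, y = a ++ z ++ b -> ~ forbidden z.

Definition forbidden_words (k : nat) : list bstring :=
  filter (fun z => decide (forbidden z)) (words k).

Definition avoiding_words (n : nat) : list bstring :=
  filter (fun y => decide (avoiding y)) (words n).

Lemma In_forbidden_words k z : In z (forbidden_words k) <-> length z = k /\ forbidden z.
Proof. unfold forbidden_words. rewrite filter_In, In_words, decide_true. tauto. Qed.

Lemma In_avoiding_words n y : In y (avoiding_words n) <-> length y = n /\ avoiding y.
Proof. unfold avoiding_words. rewrite filter_In, In_words, decide_true. tauto. Qed.

Lemma NoDup_avoiding_words n : NoDup (avoiding_words n).
Proof. apply NoDup_filter, NoDup_words. Qed.

Lemma avoiding_app_r s r : avoiding (s ++ r) -> avoiding r.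
Proof.
  intros H a z b E. apply (H (s ++ a) z b). now rewrite E, app_assoc.
Qed.

Definition concat_pairs (L M : list bstring) : list bstring :=
  map (fun '(z, c) => z ++ c) (list_prod L M).

(* Contains every [b :: y] with [y] avoiding and [b :: y] not: such a word must begin
   with a forbidden factor. *)
Definition blocked_words (n : nat) : list bstring :=
  flat_map (fun k => concat_pairs (forbidden_words (S k)) (avoiding_words (n - k)))
    (seq 0 (S n)).

Hypothesis forbidden_nil : ~ forbidden [].

Lemma avoiding_nil : avoiding [].
Proof. intros [|] [|] c E; try discriminate. exact forbidden_nil. Qed.

Lemma length_avoiding_words_0 : length (avoiding_words 0) = 1%nat.
Proof.
  unfold avoiding_words. simpl.
  assert (H := avoiding_nil). rewrite <- decide_true in H. now rewrite H.
Qed.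

Lemma In_blocked_words n b y :
  In y (avoiding_words n) -> ~ avoiding (b :: y) -> In (b :: y) (blocked_words n).
Proof.
  rewrite In_avoiding_words. intros [Hlen Hy] Hby.
  assert (exists a z c, b :: y = a ++ z ++ c /\ forbidden z) as [a [z [c [E Hz]]]].
  { apply NNPP. intros Hno. apply Hby. intros a z c E Hz. apply Hno. eauto. }
  destruct a as [|a0 a]; [| injection E as _ E; now destruct (Hy a z c E)].
  destruct z as [|z0 z]; [contradiction |].
  injection E as <- E. subst y.
  apply in_flat_map. exists (length z). rewrite length_app in Hlen. split.
  - apply in_seq. lia.
  - apply in_map_iff. exists (b :: z, c). split; [reflexivity |].
    apply in_prod; [apply In_forbidden_words | apply In_avoiding_words]; split; auto.
    + lia.
    + now apply (avoiding_app_r z).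
Qed.

Lemma avoiding_words_count n :
  (2 * length (avoiding_words n)
     <= length (avoiding_words (S n)) + length (blocked_words n))%nat.
Proof.
  rewrite <- length_cons_both, <- (filter_length (fun y => decide (avoiding y))).
  assert (ND : NoDup (cons_both (avoiding_words n)))
    by apply NoDup_cons_both, NoDup_avoiding_words.
  apply Nat.add_le_mono; apply NoDup_incl_length; try now apply NoDup_filter.
  all: intros x Hx; apply filter_In in Hx as [Hx Hdec];
    apply In_cons_both in Hx as [b [y [-> Hy]]].
  - apply In_avoiding_words in Hy. apply In_avoiding_words.
    split; [simpl; f_equal; tauto | now apply decide_true].
  - apply In_blocked_words; auto.
    now apply Bool.negb_true_iff, decide_false in Hdec.
Qed.

Lemma length_blocked_words n :
  INR (length (blocked_words n)) =
  sum_f_R0 (fun k => INR (length (forbidden_words (S k))) *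
                     INR (length (avoiding_words (n - k)))) n.
Proof.
  unfold blocked_words. rewrite length_flat_map_seq.
  apply sum_eq. intros k _. unfold concat_pairs.
  now rewrite length_map, length_prod, mult_INR.
Qed.

End Avoidance.

Lemma sum_geometric_le r n : 0 <= r < 1 -> sum_f_R0 (fun k => r ^ k) n <= / (1 - r).
Proof.
  intros Hr. rewrite tech3 by lra.
  assert (0 <= r ^ S n) by (apply pow_le; lra).
  unfold Rdiv. rewrite <- (Rmult_1_l (/ (1 - r))) at 2.
  apply Rmult_le_compat_r; [apply Rlt_le, Rinv_0_lt_compat |]; lra.
Qed.

Lemma Rdiv_lt_one a b : 0 < b -> a < b -> a / b < 1.
Proof.
  intros Hb Hab. apply (Rmult_lt_reg_r b); [exact Hb |].
  unfold Rdiv. rewrite Rmult_assoc, Rinv_l; lra.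
Qed.

(* Each term is bounded using [a (n - k) <= a n / lam ^ k]; the smallness of [B] then
   absorbs the geometric sum into [(2 - lam) * a n]. *)
Lemma convolution_le_geometric (a f : nat -> R) (B mu lam : R) (n : nat) :
  0 < mu < lam -> 0 <= B -> B * mu <= (2 - lam) * (1 - mu / lam) ->
  (forall k, 0 <= a k) -> (forall k, f k <= B * mu ^ k) ->
  (forall i, (i <= n)%nat -> a (n - i)%nat * lam ^ i <= a n) ->
  sum_f_R0 (fun k => f (S k) * a (n - k)%nat) n <= (2 - lam) * a n.
Proof.
  intros Hmu HB Hsmall a_ge0 f_le Hback.
  set (rho := mu / lam) in Hsmall.
  assert (Hrho : 0 < rho < 1)
    by (split; [apply Rdiv_lt_0_compat | apply Rdiv_lt_one]; lra).
  apply Rle_trans with (sum_f_R0 (fun k => B * mu * a n * rho ^ k) n).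
  - apply sum_Rle. intros k Hk.
    assert (Hlamk : 0 < lam ^ k) by (apply pow_lt; lra).
    assert (Hdrop : a (n - k)%nat <= a n * / lam ^ k).
    { apply (Rmult_le_reg_r (lam ^ k)); [exact Hlamk |].
      rewrite Rmult_assoc, Rinv_l by lra. rewrite Rmult_1_r. now apply Hback. }
    replace (B * mu * a n * rho ^ k) with (B * mu ^ S k * (a n * / lam ^ k))
      by (unfold rho, Rdiv; rewrite Rpow_mult_distr, pow_inv; simpl; ring).
    apply Rle_trans with (B * mu ^ S k * a (n - k)%nat).
    + apply Rmult_le_compat_r; auto.
    + apply Rmult_le_compat_l; auto. apply Rmult_le_pos; [lra | apply pow_le; lra].
  - assert (HBa : 0 <= B * mu * a n) by (apply Rmult_le_pos; [nra | auto]).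
    replace (sum_f_R0 (fun k => B * mu * a n * rho ^ k) n)
      with (B * mu * a n * sum_f_R0 (fun k => rho ^ k) n)
      by (rewrite scal_sum; apply sum_eq; intros; ring).
    apply Rle_trans with (B * mu * a n * / (1 - rho)).
    + apply Rmult_le_compat_l; [exact HBa | apply sum_geometric_le; lra].
    + apply (Rmult_le_reg_r (1 - rho)); [lra |].
      rewrite Rmult_assoc, Rinv_l by lra. specialize (a_ge0 n). nra.
Qed.

Lemma geometric_growth (a f : nat -> R) (B mu lam : R) :
  0 < mu < lam -> 0 <= B -> B * mu <= (2 - lam) * (1 - mu / lam) ->
  a 0%nat = 1 -> (forall n, 0 <= a n) -> (forall k, f k <= B * mu ^ k) ->
  (forall n, 2 * a n <= a (S n) + sum_f_R0 (fun k => f (S k) * a (n - k)%nat) n) ->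
  forall n, lam ^ n <= a n.
Proof.
  intros Hmu HB Hsmall a0 a_ge0 f_le Hrec.
  assert (Hback : forall n i, (i <= n)%nat -> a (n - i)%nat * lam ^ i <= a n).
  { induction n as [|n IH]; intros i Hi.
    { replace i with 0%nat by lia. simpl. lra. }
    assert (Hstep : lam * a n <= a (S n)).
    { pose proof (convolution_le_geometric a f B mu lam n Hmu HB Hsmall a_ge0 f_le IH).
      specialize (Hrec n). lra. }
    destruct i as [|i]; [simpl; lra |].
    simpl (S n - S i)%nat. specialize (IH i ltac:(lia)). simpl. nra. }
  intros n. specialize (Hback n n (le_n n)). rewrite Nat.sub_diag, a0 in Hback. lra.
Qed.

Section Konig.

Variable P : bstring -> Prop.

Hypothesis P_suffix : forall s r, P (s ++ r) -> P r.

Definition extendable (r : bstring) : Prop :=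
  forall m, exists s, length s = m /\ P (s ++ r).

Lemma extendable_cons r :
  extendable r -> extendable (true :: r) \/ extendable (false :: r).
Proof.
  intros Hr. apply NNPP. intros Hno. apply not_or_and in Hno as [Ht Hf].
  apply not_all_ex_not in Ht as [mt Ht]. apply not_all_ex_not in Hf as [mf Hf].
  destruct (Hr (S (mt + mf))) as [s [Hs HP]].
  assert (Hne : s <> []) by (intros ->; discriminate).
  destruct (exists_last Hne) as [s0 [b ->]].
  rewrite length_app in Hs. simpl in Hs. rewrite <- app_assoc in HP. simpl in HP.
  destruct b; [apply Ht | apply Hf];
    [exists (skipn mf s0) | exists (skipn mt s0)];
    (split; [rewrite length_skipn; lia |]).
  - apply (P_suffix (firstn mf s0)). now rewrite app_assoc, firstn_skipn.
  - apply (P_suffix (firstn mt s0)). now rewrite app_assoc, firstn_skipn.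
Qed.

Fixpoint grow (n : nat) : bstring :=
  match n with
  | O => []
  | S n => if decide (extendable (true :: grow n)) then true :: grow n else false :: grow n
  end.

Hypothesis P_all_lengths : forall m, exists y, length y = m /\ P y.

Lemma extendable_grow n : extendable (grow n).
Proof.
  induction n as [|n IH]; simpl.
  - intros m. destruct (P_all_lengths m) as [y [Hy HP]].
    exists y. now rewrite app_nil_r.
  - destruct (decide (extendable (true :: grow n))) eqn:E.
    + now rewrite decide_true in E.
    + rewrite decide_false in E. destruct (extendable_cons _ IH); tauto.
Qed.

(* Words are extended on the left, so the branch is read off the sequence backwards. *)
Lemma konig : exists w : nat -> bool, forall n, P (rev (map w (seq 0 n))).
Proof.
  set (w := fun n => hd false (grow (S n))).
  assert (Hgrow : forall n, grow (S n) = w n :: grow n).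
  { intros n. unfold w. simpl. now destruct decide. }
  assert (Hrev : forall n, grow n = rev (map w (seq 0 n))).
  { induction n as [|n IH]; [reflexivity |].
    now rewrite Hgrow, seq_S, map_app, rev_app_distr, IH. }
  exists w. intros n. rewrite <- Hrev.
  destruct (extendable_grow n 0%nat) as [[|b s] [Hs HP]]; [exact HP | discriminate].
Qed.

End Konig.

Lemma sparse_forbidden_avoidable (mu : R) : 0 < mu < 2 ->
  exists B, 0 < B /\
  forall forbidden : bstring -> Prop, ~ forbidden [] ->
  (forall k, INR (length (forbidden_words forbidden k)) <= B * mu ^ k) ->
  exists w : nat -> bool, forall i j, ~ forbidden (rev (substring w i j)).
Proof.
  intros Hmu.
  set (lam := (mu + 2) / 2).
  assert (Hlam : mu < lam < 2) by (unfold lam; lra).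
  set (B := (2 - lam) * (1 - mu / lam) / mu).
  assert (HB : 0 < B).
  { assert (mu / lam < 1) by (apply Rdiv_lt_one; lra).
    apply Rdiv_lt_0_compat; [apply Rmult_lt_0_compat |]; lra. }
  exists B. split; [exact HB |].
  intros forbidden Hnil Hsparse.
  assert (Hgrowth : forall n, lam ^ n <= INR (length (avoiding_words forbidden n))).
  { apply (geometric_growth _ (fun k => INR (length (forbidden_words forbidden k))) B mu lam);
      auto.
    - lra.
    - lra.
    - right. unfold B. field. lra.
    - now rewrite length_avoiding_words_0.
    - intros n. apply pos_INR.
    - intros n. rewrite <- length_blocked_words.
      pose proof (le_INR _ _ (avoiding_words_count forbidden Hnil n)) as H.
      rewrite plus_INR, mult_INR in H. simpl INR in H. lra. }
  assert (Hwords : forall m, exists y, length y = m /\ avoiding forbidden y).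
  { intros m. specialize (Hgrowth m).
    assert (0 < lam ^ m) by (apply pow_lt; lra).
    destruct (avoiding_words forbidden m) as [|y l] eqn:E; [simpl in Hgrowth; lra |].
    exists y. apply In_avoiding_words. rewrite E. now left. }
  destruct (konig _ (avoiding_app_r forbidden) Hwords) as [w Hw].
  exists w. intros i j.
  specialize (Hw (i + S (j - i))%nat).
  rewrite seq_app, map_app, rev_app_distr in Hw.
  now apply (Hw [] _ (rev (map w (seq 0 i)))).
Qed.

Definition compressible (U : prf) (c d : R) (x : bstring) : Prop :=
  exists p, decomp U p x /\ INR (length p) < c * INR (length x) - d.

Lemma length_compressible_words (U : prf) (c d : R) (k : nat) :
  INR (length (forbidden_words (fun z => compressible U c d (rev z)) k))
    <= 2 * Rpower 2 (c * INR k - d).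
Proof.
  apply (count_describable (fun p z => decomp U p (rev z))).
  - intros p x y Hx Hy. rewrite <- (rev_involutive x), <- (rev_involutive y).
    f_equal. exact (decomp_functional _ _ _ _ Hx Hy).
  - apply NoDup_filter, NoDup_words.
  - intros z Hz. apply In_forbidden_words in Hz as [Hlen [p [Hp Hshort]]].
    exists p. split; auto. now rewrite length_rev, Hlen in Hshort.
Qed.

Lemma exists_offset_le (B c : R) : 0 < B ->
  exists d, 0 <= d /\ forall k, 2 * Rpower 2 (c * INR k - d) <= B * Rpower 2 c ^ k.
Proof.
  intros HB. destruct (INR_unbounded (2 / B)) as [N HN].
  exists (INR N). split; [apply pos_INR |]. intros k.
  replace (Rpower 2 (c * INR k - INR N)) with (Rpower 2 c ^ k * / 2 ^ N).
  2: { unfold Rminus. rewrite Rpower_plus, Rpower_Ropp, Rpower_pow by lra.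
       rewrite Rmult_comm, <- Rpower_mult, Rpower_pow by apply exp_pos. ring. }
  assert (HN2 : INR N < 2 ^ N)
    by (rewrite <- (pow_INR 2); apply lt_INR, Nat.pow_gt_lin_r; lia).
  assert (H2 : 2 < B * 2 ^ N).
  { replace 2 with (2 / B * B) at 1 by (field; lra). nra. }
  assert (Hdiv : 2 * / 2 ^ N <= B).
  { apply (Rmult_le_reg_r (2 ^ N)); [apply pow_lt; lra |].
    rewrite Rmult_assoc, Rinv_l by (apply pow_nonzero; lra). lra. }
  assert (0 <= Rpower 2 c ^ k) by (apply pow_le, Rlt_le, exp_pos). nra.
Qed.

Theorem lemma1 :
  forall U : prf, optimal U ->
  forall c : R, c < 1 ->
  exists (w : nat -> bool) (d : R),
    forall (i j : nat) (p : bstring), (i <= j)%nat ->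
      decomp U p (substring w i j) ->
      INR (length p) >= c * INR (length (substring w i j)) - d.
Proof.
  intros U _ c Hc.
  assert (Hmu : 0 < Rpower 2 c < 2).
  { split; [apply exp_pos |]. rewrite <- (Rpower_1 2) at 2 by lra. apply Rpower_lt; lra. }
  destruct (sparse_forbidden_avoidable _ Hmu) as [B [HB Havoid]].
  destruct (exists_offset_le B c HB) as [d [Hd Hoffset]].
  destruct (Havoid (fun z => compressible U c d (rev z))) as [w Hw].
  - intros [p [_ Hp]]. simpl in Hp. pose proof (pos_INR (length p)). lra.
  - intros k. eapply Rle_trans; [apply length_compressible_words | apply Hoffset].
  - exists w, d. intros i j p _ Hp. apply Rnot_lt_ge. intros Hlt.
    apply (Hw i j). exists p. now rewrite rev_involutive.
Qed.
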